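(* Let $e^{-1}<p\leq 1$ and let $\bar Q=(\bar q_{j,k})_{j,k\geq1}$ be the generator on $\mathbb N=\{1,2,\dots\}$ with $\bar q_{j,k}=\binom{j-1}{k-1}p^k(1-p)^{j-k}$ for $1\leq k\leq j-1$, $\bar q_{j,j+1}=(j+1)p$, $\bar q_{j,j}=p^j-(2+j)p$, and $\bar q_{j,k}=0$ otherwise. Then the Markov chain with generator $\bar Q$ is transient. *)

From Stdlib Require Import Reals Lra Lia Arith List Bool.
Import ListNotations.
Open Scope R_scope.

(* The generator \bar Q on the state space N = {1,2,...} (states are nats >= 1;
   the value 0 is not a state and is never used). *)
Definition qbar (p : R) (j k : nat) : R :=
  if ((1 <=? k) && (k <=? j - 1))%nat then
    C (j - 1) (k - 1) * p ^ k * (1 - p) ^ (j - k)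
  else if (k =? j + 1)%nat then INR (j + 1) * p
  else if (k =? j)%nat then p ^ j - INR (2 + j) * p
  else 0.

Definition jump_matrix (Q : nat -> nat -> R) (j k : nat) : R :=
  if (k =? j)%nat then 0 else Q j k / (- Q j j).

Definition sum_states (m : nat) (f : nat -> R) : R :=
  fold_right Rplus 0 (map f (seq 1 m)).

(* First-passage probabilities of the jump chain of \bar Q:
   first_passage p n i j = P_i(first visit to j at a time >= 1 happens at step n).
   Since \bar q_{i,k} = 0 for k > i+1, from state i the chain can only jump to
   states 1..i+1, so the (a priori infinite) sum over intermediate states is
   exactly the finite sum over k = 1..i+1. *)
Fixpoint first_passage (p : R) (n i j : nat) : R :=
  match n with
  | O => 0
  | S O => jump_matrix (qbar p) i j
  | S m => sum_states (i + 1)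
             (fun k => if (k =? j)%nat then 0
                       else jump_matrix (qbar p) i k * first_passage p m k j)
  end.

Definition return_prob_partial (p : R) (N i : nat) : R :=
  sum_states N (fun n => first_passage p n i i).

(* Transience of the chain with generator \bar Q (Feller/Norris): every state
   i >= 1 is transient, i.e. its return probability f_ii = sup_N (partial sums)
   is strictly less than 1.  For a CTMC, transience of a state is equivalent to
   transience for its jump chain (Norris, Thm 3.4.1), and is defined by it here. *)
Definition qbar_transient (p : R) : Prop :=
  forall i : nat, (1 <= i)%nat ->
    exists eps : R, 0 < eps /\
      forall N : nat, return_prob_partial p N i <= 1 - eps.

From Stdlib Require Import Reals Lra Lia Arith List Bool.
Import ListNotations.
Open Scope R_scope.

(* Take [a = (1 + ln p) / 2], which lies in (0, 1/2] exactly because [p > e^-1], and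
   [V l = l ^ -a].  From state [n + 1] the jump chain moves down to [l] with weight
   proportional to [p P(Bin(n, p) = l - 1)] and up to [n + 2] with weight [(n + 2) p]; the
   concavity of [x ^ a] (Bernoulli's inequality) together with [p ^ -a <= 1 + a] shows that
   [V] is superharmonic.  Hence the probability of ever hitting [i] from [k] is at most
   [V k / V i], which is [< 1] for [k = i + 1]; since the chain steps from [i] to [i + 1]
   with positive probability, the return probability to [i] is bounded away from 1. *)

(** * Bernoulli's inequality for real exponents *)

(* [x |-> exp (a x) - a exp x] has derivative of the sign of [-x], so it peaks at [0]. *)
Lemma exp_mul_le_convex (a u : R) : 0 <= a <= 1 -> exp (a * u) <= 1 - a + a * exp u.
Proof.
  intros ha.
  set (f := fun x => exp (a * x) - a * exp x).
  set (f' := fun x => a * (exp (a * x) - exp x)).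
  assert (hf : forall x, derivable_pt_lim f x (f' x)).
  { intros x; unfold f, f'.
    replace (a * (exp (a * x) - exp x)) with (exp (a * x) * (a * 1) - a * exp x) by ring.
    apply derivable_pt_lim_minus.
    - apply (derivable_pt_lim_comp (fun y => a * y) exp).
      + apply derivable_pt_lim_scal, derivable_pt_lim_id.
      + apply derivable_pt_lim_exp.
    - apply derivable_pt_lim_scal, derivable_pt_lim_exp. }
  assert (hf0 : f 0 = 1 - a) by (unfold f; rewrite Rmult_0_r, exp_0; ring).
  assert (exp_le : forall x y, x <= y -> exp x <= exp y).
  { intros x y [hxy | ->]; [left; apply exp_increasing | right]; auto. }
  enough (f u <= 1 - a) by (unfold f in *; lra).
  destruct (Rtotal_order u 0) as [hu | [-> | hu]].
  - destruct (MVT_cor2 f f' u 0 hu (fun c _ => hf c)) as [c [hc hc1]].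
    assert (exp c <= exp (a * c)) by (apply exp_le; nra).
    assert (0 <= f' c) by (unfold f'; nra).
    nra.
  - lra.
  - destruct (MVT_cor2 f f' 0 u hu (fun c _ => hf c)) as [c [hc hc1]].
    assert (exp (a * c) <= exp c) by (apply exp_le; nra).
    assert (f' c <= 0) by (unfold f'; nra).
    nra.
Qed.

Lemma Rpower_le_bernoulli (r a : R) :
  0 < r -> 0 <= a <= 1 -> Rpower r a <= 1 + a * (r - 1).
Proof.
  intros hr ha; unfold Rpower.
  pose proof (exp_mul_le_convex a (ln r) ha) as h.
  rewrite exp_ln in h by exact hr; lra.
Qed.

(* [sum_states m f] is [sum_list (seq 1 m) f] by conversion. *)
Definition sum_list (s : list nat) (f : nat -> R) : R := fold_right Rplus 0 (map f s).

Lemma sum_list_nil f : sum_list [] f = 0.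
Proof. reflexivity. Qed.

Lemma sum_list_cons x s f : sum_list (x :: s) f = f x + sum_list s f.
Proof. reflexivity. Qed.

Lemma sum_list_app s1 s2 f : sum_list (s1 ++ s2) f = sum_list s1 f + sum_list s2 f.
Proof.
  induction s1 as [|x s IH]; simpl.
  - rewrite sum_list_nil; ring.
  - rewrite !sum_list_cons, IH; ring.
Qed.

Lemma sum_list_map h s f : sum_list (map h s) f = sum_list s (fun x => f (h x)).
Proof. unfold sum_list; rewrite map_map; reflexivity. Qed.

Lemma sum_list_ext s f g : (forall x, In x s -> f x = g x) -> sum_list s f = sum_list s g.
Proof.
  induction s as [|x s IH]; intros hfg; [reflexivity|].
  rewrite !sum_list_cons, (hfg x (or_introl eq_refl)), IH; auto.
  intros y hy; apply hfg; right; exact hy.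
Qed.

Lemma sum_list_le s f g : (forall x, In x s -> f x <= g x) -> sum_list s f <= sum_list s g.
Proof.
  induction s as [|x s IH]; intros hfg; [rewrite !sum_list_nil; lra|].
  rewrite !sum_list_cons; apply Rplus_le_compat; [apply hfg; left; reflexivity|].
  apply IH; intros y hy; apply hfg; right; exact hy.
Qed.

Lemma sum_list_plus s f g :
  sum_list s (fun x => f x + g x) = sum_list s f + sum_list s g.
Proof.
  induction s as [|x s IH]; [rewrite !sum_list_nil; ring|].
  rewrite !sum_list_cons, IH; ring.
Qed.

Lemma sum_list_scal_l s c f : sum_list s (fun x => c * f x) = c * sum_list s f.
Proof.
  induction s as [|x s IH]; [rewrite !sum_list_nil; ring|].
  rewrite !sum_list_cons, IH; ring.
Qed.

Lemma sum_list_zero s : sum_list s (fun _ => 0) = 0.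
Proof.
  induction s as [|x s IH]; [reflexivity|].
  rewrite sum_list_cons, IH; ring.
Qed.

Lemma sum_list_nonneg s f : (forall x, In x s -> 0 <= f x) -> 0 <= sum_list s f.
Proof. intros hf; rewrite <- (sum_list_zero s); apply sum_list_le, hf. Qed.

Lemma sum_list_comm s1 s2 (g : nat -> nat -> R) :
  sum_list s1 (fun x => sum_list s2 (g x)) = sum_list s2 (fun y => sum_list s1 (fun x => g x y)).
Proof.
  induction s1 as [|x s IH].
  - rewrite sum_list_nil; symmetry; apply sum_list_zero.
  - rewrite sum_list_cons, IH, <- sum_list_plus; reflexivity.
Qed.

Lemma sum_list_seq_sum_f_R0 a n f :
  sum_list (seq a (S n)) f = sum_f_R0 (fun m => f (a + m)%nat) n.
Proof.
  induction n as [|n IH].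
  - simpl; rewrite sum_list_cons, sum_list_nil, Nat.add_0_r; ring.
  - rewrite seq_S, sum_list_app, IH; simpl.
    rewrite sum_list_cons, sum_list_nil, Nat.add_succ_r; ring.
Qed.

Lemma sum_list_seq_indicator a m i c :
  sum_list (seq a m) (fun x => if (x =? i)%nat then c else 0) =
  if ((a <=? i) && (i <? a + m))%nat then c else 0.
Proof.
  revert a; induction m as [|m IH]; intros a; simpl seq.
  - rewrite sum_list_nil, Nat.add_0_r.
    destruct (Nat.leb_spec a i), (Nat.ltb_spec i a); simpl; auto; lia.
  - rewrite sum_list_cons, IH.
    destruct (Nat.eqb_spec a i), (Nat.leb_spec a i), (Nat.ltb_spec i (a + S m)),
      (Nat.leb_spec (S a) i), (Nat.ltb_spec i (S a + m)); simpl; try lia; ring.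
Qed.

(** * Binomial weights *)

Lemma C_nonneg n k : 0 <= C n k.
Proof.
  unfold C; apply Rle_mult_inv_pos; [apply pos_INR|].
  apply Rmult_lt_0_compat; apply INR_fact_lt_0.
Qed.

Lemma C_diag n : C n n = 1.
Proof. unfold C; rewrite Nat.sub_diag; simpl; field; apply INR_fact_neq_0. Qed.

Lemma C_div_succ n k : C n k / INR (S k) = C (S n) (S k) / INR (S n).
Proof.
  unfold C; replace (S n - S k)%nat with (n - k)%nat by lia.
  rewrite (fact_simpl n), (fact_simpl k), !mult_INR.
  pose proof (INR_fact_neq_0 n); pose proof (INR_fact_neq_0 k).
  pose proof (INR_fact_neq_0 (n - k)).
  assert (INR (S n) <> 0) by (apply not_0_INR; lia).
  assert (INR (S k) <> 0) by (apply not_0_INR; lia).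
  field; auto.
Qed.

(* [p] times the probability that a Binomial(n, p) variable equals [l - 1]; these are
   the rates [qbar (S n) l] for [1 <= l <= n], extended by [p ^ S n] at [l = S n]. *)
Definition binom_weight (p : R) (n l : nat) : R := C n (l - 1) * p ^ l * (1 - p) ^ (S n - l).

Lemma binom_weight_nonneg p n l : 0 <= p <= 1 -> 0 <= binom_weight p n l.
Proof.
  intros hp; unfold binom_weight.
  pose proof (C_nonneg n (l - 1)); pose proof (pow_le p l (proj1 hp)).
  pose proof (pow_le (1 - p) (S n - l) ltac:(lra)).
  apply Rmult_le_pos; [apply Rmult_le_pos |]; assumption.
Qed.

Lemma binom_weight_last p n : binom_weight p n (S n) = p ^ S n.
Proof.
  unfold binom_weight; rewrite Nat.sub_diag, Nat.sub_succ, Nat.sub_0_r, C_diag; simpl; ring.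
Qed.

Lemma sum_binom_weight p n : sum_list (seq 1 (S n)) (binom_weight p n) = p.
Proof.
  rewrite sum_list_seq_sum_f_R0.
  rewrite (sum_eq _ (fun m => C n m * p ^ m * (1 - p) ^ (n - m) * p)).
  - rewrite <- scal_sum, <- binomial, Rplus_minus, pow1; ring.
  - intros m _; unfold binom_weight; simpl.
    rewrite Nat.sub_0_r; ring.
Qed.

Lemma sum_binom_weight_div_le p n : 0 <= p <= 1 ->
  sum_list (seq 1 (S n)) (fun l => binom_weight p n l / INR l) <= / INR (S n).
Proof.
  intros hp; rewrite sum_list_seq_sum_f_R0.
  set (b := fun j => C (S n) j * p ^ j * (1 - p) ^ (S n - j)).
  rewrite (sum_eq _ (fun m => b (S m) * / INR (S n))).
  - rewrite <- scal_sum.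
    assert (hb : sum_f_R0 (fun m => b (S m)) n <= 1).
    { assert (hsum : sum_f_R0 b (S n) = 1)
        by (unfold b; rewrite <- binomial, Rplus_minus; apply pow1).
      rewrite decomp_sum in hsum by lia; simpl pred in hsum.
      assert (0 <= b 0%nat).
      { unfold b; rewrite pow_O, Nat.sub_0_r, Rmult_1_r.
        apply Rmult_le_pos; [apply C_nonneg | apply pow_le; lra]. }
      lra. }
    assert (0 < / INR (S n)) by (apply Rinv_0_lt_compat, lt_0_INR; lia).
    nra.
  - intros m _; unfold binom_weight, b; simpl (1 + m)%nat.
    rewrite Nat.sub_succ, Nat.sub_0_r.
    transitivity (C n m / INR (S m) * (p ^ S m * (1 - p) ^ (S n - S m))).
    + unfold Rdiv; ring.
    + rewrite C_div_succ; unfold Rdiv; ring.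
Qed.

(** * The jump chain of [qbar] and its Lyapunov function *)

(* [exit_rate p n = - qbar p (S n) (S n)], the total jump rate out of state [S n]. *)
Definition exit_rate (p : R) (n : nat) : R := INR (n + 3) * p - p ^ S n.

Lemma jump_diag Q k : jump_matrix Q k k = 0.
Proof. unfold jump_matrix; rewrite Nat.eqb_refl; reflexivity. Qed.

Lemma jump_beyond p k l : (k + 1 < l)%nat -> jump_matrix (qbar p) k l = 0.
Proof.
  intros hl; unfold jump_matrix, qbar.
  rewrite (proj2 (Nat.eqb_neq l k)), (proj2 (Nat.leb_gt l (k - 1))), andb_false_r,
    (proj2 (Nat.eqb_neq l (k + 1))) by lia.
  unfold Rdiv; ring.
Qed.

Lemma jump_below p n l : (1 <= l <= n)%nat ->
  jump_matrix (qbar p) (S n) l = binom_weight p n l / exit_rate p n.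
Proof.
  intros hl; unfold jump_matrix, qbar.
  rewrite (proj2 (Nat.eqb_neq l (S n))), (proj2 (Nat.leb_le 1 l)),
    (proj2 (Nat.leb_le l (S n - 1))), (proj2 (Nat.leb_gt (S n) (S n - 1))), andb_false_r,
    (proj2 (Nat.eqb_neq (S n) (S n + 1))), Nat.eqb_refl by lia; simpl andb.
  unfold binom_weight, exit_rate; replace (S n - 1)%nat with n by lia.
  replace (n + 3)%nat with (2 + S n)%nat by lia.
  unfold Rdiv; f_equal; f_equal; ring.
Qed.

Lemma jump_above p n :
  jump_matrix (qbar p) (S n) (S (S n)) = INR (n + 2) * p / exit_rate p n.
Proof.
  unfold jump_matrix, qbar.
  rewrite (proj2 (Nat.eqb_neq (S (S n)) (S n))), (proj2 (Nat.leb_gt (S (S n)) (S n - 1))),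
    andb_false_r, (proj2 (Nat.leb_gt (S n) (S n - 1))), andb_false_r,
    (proj2 (Nat.eqb_eq (S (S n)) (S n + 1))), (proj2 (Nat.eqb_neq (S n) (S n + 1))),
    Nat.eqb_refl by lia.
  unfold exit_rate; replace (S n + 1)%nat with (n + 2)%nat by lia.
  replace (n + 3)%nat with (2 + S n)%nat by lia.
  unfold Rdiv; f_equal; f_equal; ring.
Qed.

Section JumpChain.

Variable p : R.
Hypothesis hp : 0 < p <= 1.

Local Notation P := (jump_matrix (qbar p)).

Lemma exit_rate_pos n : 0 < exit_rate p n.
Proof.
  unfold exit_rate; rewrite plus_INR; simpl INR; simpl pow.
  assert (p ^ n <= 1) by (rewrite <- (pow1 n); apply pow_incr; lra).
  pose proof (pos_INR n); nra.
Qed.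

Lemma jump_nonneg k l : (1 <= k)%nat -> 0 <= P k l.
Proof.
  intros hk; destruct k as [|n]; [lia|].
  pose proof (exit_rate_pos n).
  destruct (Nat.eq_dec l 0) as [-> | hl0].
  - unfold jump_matrix, qbar; simpl; unfold Rdiv; rewrite Rmult_0_l; lra.
  - destruct (le_lt_dec l n).
    + rewrite jump_below by lia.
      apply Rle_mult_inv_pos; [apply binom_weight_nonneg; lra | assumption].
    + destruct (Nat.eq_dec l (S n)) as [-> | ]; [rewrite jump_diag; lra|].
      destruct (Nat.eq_dec l (S (S n))) as [-> | ]; [| rewrite jump_beyond by lia; lra].
      rewrite jump_above; apply Rle_mult_inv_pos; [| assumption].
      apply Rmult_le_pos; [apply pos_INR | lra].
Qed.

Lemma jump_expectation n (g : nat -> R) :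
  sum_list (seq 1 (S n + 1)) (fun l => P (S n) l * g l) =
  (sum_list (seq 1 n) (fun l => binom_weight p n l * g l) + INR (n + 2) * p * g (S (S n)))
  / exit_rate p n.
Proof.
  pose proof (exit_rate_pos n).
  replace (S n + 1)%nat with (S (S n)) by lia.
  rewrite seq_S, seq_S, !sum_list_app.
  rewrite (sum_list_ext (seq 1 n) _ (fun l => / exit_rate p n * (binom_weight p n l * g l))).
  2:{ intros l hl; apply in_seq in hl; rewrite jump_below by lia; unfold Rdiv; ring. }
  rewrite sum_list_scal_l; simpl; rewrite !sum_list_cons, !sum_list_nil.
  replace (1 + n)%nat with (S n) by lia; replace (S (n + 1)) with (S (S n)) by lia.
  rewrite jump_diag, jump_above; field; lra.
Qed.

Lemma jump_row_sum n : sum_list (seq 1 (S n + 1)) (fun l => P (S n) l * 1) = 1.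
Proof.
  pose proof (exit_rate_pos n).
  rewrite jump_expectation, (sum_list_ext _ _ (binom_weight p n)) by (intros; ring).
  pose proof (sum_binom_weight p n) as hsum.
  rewrite seq_S, sum_list_app, sum_list_cons, sum_list_nil, binom_weight_last in hsum.
  assert (h3 : INR (n + 3) = INR (n + 2) + 1) by (rewrite <- S_INR; f_equal; lia).
  replace (sum_list (seq 1 n) (binom_weight p n) + INR (n + 2) * p * 1) with (exit_rate p n)
    by (unfold exit_rate; rewrite h3; lra).
  field; lra.
Qed.

Lemma jump_above_pos n : 0 < P (S n) (S (S n)).
Proof.
  rewrite jump_above; apply Rdiv_lt_0_compat; [| apply exit_rate_pos].
  apply Rmult_lt_0_compat; [apply lt_0_INR; lia | lra].
Qed.

End JumpChain.

Definition lyapunov (a : R) (l : nat) : R := Rpower (INR l) (- a).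

Lemma lyapunov_pos a l : 0 < lyapunov a l.
Proof. apply exp_pos. Qed.

Lemma lyapunov_decreasing a l : 0 < a -> (1 <= l)%nat -> lyapunov a (S l) < lyapunov a l.
Proof.
  intros ha hl; unfold lyapunov; rewrite !Rpower_Ropp.
  apply Rinv_lt_contravar.
  - apply Rmult_lt_0_compat; apply exp_pos.
  - apply Rlt_Rpower_l; [exact ha|]; split; [apply lt_0_INR; lia | apply lt_INR; lia].
Qed.

Lemma lyapunov_ratio a x l : 0 < x -> (1 <= l)%nat ->
  lyapunov a l = Rpower x (- a) * Rpower (x / INR l) a.
Proof.
  intros hx hl; unfold lyapunov, Rpower; rewrite <- exp_plus; f_equal.
  unfold Rdiv; rewrite ln_mult, ln_Rinv; [ring | | | apply Rinv_0_lt_compat];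
    try apply lt_0_INR; lia || lra.
Qed.

Section Drift.

Variables (p a : R).
Hypotheses (hp : 0 < p <= 1) (ha : 0 <= a <= 1) (hpa : Rpower p (- a) <= 1 + a).

(* [l ^ -a = y ^ -a * (y / l) ^ a] with [y = (n + 1) p]; Bernoulli linearises [(y / l) ^ a],
   and the two resulting binomial sums are [p] and at most [1 / (n + 1)]. *)
Lemma sum_binom_weight_lyapunov_le n :
  sum_list (seq 1 (S n)) (fun l => binom_weight p n l * lyapunov a l)
  <= p * Rpower (INR (S n) * p) (- a).
Proof.
  set (y := INR (S n) * p).
  assert (hy : 0 < y) by (apply Rmult_lt_0_compat; [apply lt_0_INR; lia | lra]).
  set (c := Rpower y (- a)).
  assert (hc : 0 < c) by apply exp_pos.
  apply Rle_trans with (sum_list (seq 1 (S n))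
    (fun l => c * ((1 - a) * binom_weight p n l + a * y * (binom_weight p n l / INR l)))).
  - apply sum_list_le; intros l hl; apply in_seq in hl.
    assert (hl0 : 0 < INR l) by (apply lt_0_INR; lia).
    rewrite (lyapunov_ratio a y l hy) by lia; fold c.
    pose proof (Rpower_le_bernoulli (y / INR l) a (Rdiv_lt_0_compat _ _ hy hl0) ha).
    pose proof (binom_weight_nonneg p n l ltac:(lra)).
    replace ((1 - a) * binom_weight p n l + a * y * (binom_weight p n l / INR l))
      with (binom_weight p n l * (1 + a * (y / INR l - 1))) by (field; lra).
    assert (0 <= c * binom_weight p n l) by (apply Rmult_le_pos; lra).
    replace (binom_weight p n l * (c * Rpower (y / INR l) a))
      with (c * binom_weight p n l * Rpower (y / INR l) a) by ring.
    replace (c * (binom_weight p n l * (1 + a * (y / INR l - 1))))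
      with (c * binom_weight p n l * (1 + a * (y / INR l - 1))) by ring.
    apply Rmult_le_compat_l; assumption.
  - rewrite sum_list_scal_l, sum_list_plus, !sum_list_scal_l, sum_binom_weight.
    pose proof (sum_binom_weight_div_le p n ltac:(lra)).
    assert (y * / INR (S n) = p) by (unfold y; field; apply not_0_INR; lia).
    assert (0 <= a * y) by (apply Rmult_le_pos; lra).
    rewrite (Rmult_comm p c); apply Rmult_le_compat_l; [lra|].
    nra.
Qed.

Lemma lyapunov_succ_le n :
  INR (n + 2) * lyapunov a (S (S n)) <= (INR (n + 2) - a) * lyapunov a (S n).
Proof.
  assert (hk : 0 < INR (S n)) by (apply lt_0_INR; lia).
  rewrite (lyapunov_ratio a (INR (S n)) (S (S n)) hk) by lia.
  replace (INR (n + 2)) with (INR (S n) + 1) by (rewrite <- S_INR; f_equal; lia).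
  rewrite (S_INR (S n)).
  fold (lyapunov a (S n)); pose proof (lyapunov_pos a (S n)).
  set (k := INR (S n)) in *.
  assert (hr : 0 < k / (k + 1)) by (apply Rdiv_lt_0_compat; lra).
  pose proof (Rpower_le_bernoulli _ a hr ha) as hb.
  set (r := Rpower (k / (k + 1)) a) in *.
  assert (hr' : (k + 1) * r <= k + 1 - a).
  { apply Rmult_le_reg_r with (/ (k + 1)); [apply Rinv_0_lt_compat; lra|].
    replace ((k + 1) * r * / (k + 1)) with r by (field; lra).
    replace ((k + 1 - a) * / (k + 1)) with (1 + a * (k / (k + 1) - 1)) by (field; lra).
    exact hb. }
  nra.
Qed.

Lemma jump_lyapunov_le n :
  sum_list (seq 1 (S n + 1)) (fun l => jump_matrix (qbar p) (S n) l * lyapunov a l)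
  <= lyapunov a (S n).
Proof.
  pose proof (exit_rate_pos p hp n) as hD.
  rewrite jump_expectation by exact hp.
  apply Rmult_le_reg_r with (exit_rate p n); [exact hD|].
  unfold Rdiv; rewrite Rmult_assoc, Rinv_l, Rmult_1_r by lra.
  pose proof (sum_binom_weight_lyapunov_le n) as hj.
  rewrite seq_S, sum_list_app, sum_list_cons, sum_list_nil, binom_weight_last in hj.
  replace (1 + n)%nat with (S n) in hj by lia.
  rewrite <- Rpower_mult_distr in hj by (try apply lt_0_INR; lia || lra).
  fold (lyapunov a (S n)) in hj.
  pose proof (lyapunov_pos a (S n)).
  assert (hup : p * (INR (n + 2) * lyapunov a (S (S n)))
                <= p * ((INR (n + 2) - a) * lyapunov a (S n)))
    by (apply Rmult_le_compat_l; [lra | apply lyapunov_succ_le]).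
  assert (hpa' : lyapunov a (S n) * Rpower p (- a) <= lyapunov a (S n) * (1 + a))
    by (apply Rmult_le_compat_l; lra).
  assert (h3 : INR (n + 3) = INR (n + 2) + 1) by (rewrite <- S_INR; f_equal; lia).
  unfold exit_rate; rewrite h3.
  nra.
Qed.

End Drift.

(** * Hitting probabilities and transience *)

Definition hit_prob (p : R) (N k i : nat) : R :=
  sum_states N (fun n => first_passage p n k i).

Section Hitting.

Variable p : R.
Hypothesis hp : 0 < p <= 1.

Local Notation P := (jump_matrix (qbar p)).

Lemma hit_prob_succ N k i : (1 <= i)%nat ->
  hit_prob p (S N) k i =
  sum_list (seq 1 (k + 1)) (fun l => P k l * (if (l =? i)%nat then 1 else hit_prob p N l i)).
Proof.
  intros hi.
  assert (hPi : P k i = sum_list (seq 1 (k + 1)) (fun l => if (l =? i)%nat then P k i else 0)).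
  { rewrite sum_list_seq_indicator.
    destruct (Nat.leb_spec 1 i), (Nat.ltb_spec i (1 + (k + 1))); simpl; try lia; auto.
    apply jump_beyond; lia. }
  unfold hit_prob, sum_states; fold (sum_list (seq 1 (S N)) (fun n => first_passage p n k i)).
  simpl seq; rewrite sum_list_cons, <- seq_shift, sum_list_map; simpl first_passage.
  rewrite (sum_list_ext (seq 1 N) _ (fun n => sum_list (seq 1 (k + 1))
    (fun l => if (l =? i)%nat then 0 else P k l * first_passage p n l i))).
  2:{ intros n hn; apply in_seq in hn; destruct n; [lia | reflexivity]. }
  rewrite sum_list_comm, hPi, <- sum_list_plus.
  apply sum_list_ext; intros l _.
  destruct (Nat.eqb_spec l i) as [-> | _].
  - rewrite sum_list_zero; ring.
  - rewrite sum_list_scal_l, Rplus_0_l; reflexivity.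
Qed.

Lemma hit_prob_succ_le (B : nat -> R) N k i : (1 <= i)%nat -> (1 <= k)%nat -> 1 <= B i ->
  (forall l, (1 <= l)%nat -> l <> i -> hit_prob p N l i <= B l) ->
  hit_prob p (S N) k i <= sum_list (seq 1 (k + 1)) (fun l => P k l * B l).
Proof.
  intros hi hk hBi hB; rewrite hit_prob_succ by exact hi.
  apply sum_list_le; intros l hl; apply in_seq in hl.
  apply Rmult_le_compat_l; [apply jump_nonneg; assumption|].
  destruct (Nat.eqb_spec l i) as [-> | hli]; [exact hBi | apply hB; [lia | exact hli]].
Qed.

Lemma hit_prob_le_superharmonic (B : nat -> R) i : (1 <= i)%nat -> 1 <= B i ->
  (forall l, (1 <= l)%nat -> 0 <= B l) ->
  (forall k, (1 <= k)%nat -> sum_list (seq 1 (k + 1)) (fun l => P k l * B l) <= B k) ->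
  forall N k, (1 <= k)%nat -> hit_prob p N k i <= B k.
Proof.
  intros hi hBi hB0 hBsup N; induction N as [|N IH]; intros k hk.
  - apply hB0; exact hk.
  - eapply Rle_trans; [apply (hit_prob_succ_le B); auto | apply hBsup; exact hk].
Qed.

End Hitting.

Lemma ln_bounds_of_exp_m1_lt p : exp (-1) < p <= 1 -> -1 < ln p <= 0.
Proof.
  intros [hp1 hp2].
  assert (hp0 : 0 < p) by (pose proof (exp_pos (-1)); lra).
  split.
  - rewrite <- (ln_exp (-1)); apply ln_increasing; [apply exp_pos | exact hp1].
  - destruct hp2 as [hp2 | ->]; [| rewrite ln_1; lra].
    rewrite <- ln_1; left; apply ln_increasing; assumption.
Qed.

(* With [u = ln p] and [a = (1 + u) / 2]: [(1 + a) (1 + a u) - 1 = a (1 + u) (1 + u / 2)]. *)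
Lemma Rpower_opp_half_log_le p : 0 < p -> -1 <= ln p <= 0 ->
  Rpower p (- ((1 + ln p) / 2)) <= 1 + (1 + ln p) / 2.
Proof.
  intros hp0 hu; set (u := ln p) in *; set (a := (1 + u) / 2).
  assert (hprod : Rpower p (- a) * Rpower p a = 1)
    by (rewrite <- Rpower_plus, Rplus_opp_l; apply Rpower_O; exact hp0).
  assert (hlin : 1 + a * u <= Rpower p a) by apply exp_ineq1_le.
  assert (hkey : 1 <= (1 + a) * (1 + a * u)).
  { replace ((1 + a) * (1 + a * u)) with (1 + a * ((1 + u) * (1 + u / 2))) by (unfold a; field).
    assert (0 <= a * ((1 + u) * (1 + u / 2))) by (unfold a; apply Rmult_le_pos; nra).
    lra. }
  assert (hX : 0 < Rpower p (- a)) by apply exp_pos.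
  assert (ha : 0 <= a) by (unfold a; lra).
  assert (Rpower p (- a) * (1 + a) * (1 + a * u) <= Rpower p (- a) * (1 + a) * Rpower p a)
    by (apply Rmult_le_compat_l; nra).
  nra.
Qed.

Section Transience.

Variables (p a : R).
Hypotheses (hp : 0 < p <= 1) (ha : 0 < a <= 1) (hpa : Rpower p (- a) <= 1 + a).

Local Notation P := (jump_matrix (qbar p)).

Lemma hit_prob_le_1 N k i : (1 <= i)%nat -> (1 <= k)%nat -> hit_prob p N k i <= 1.
Proof.
  intros hi hk; apply (hit_prob_le_superharmonic p hp (fun _ => 1)); auto.
  - lra.
  - intros; lra.
  - intros k' hk'; destruct k' as [|n]; [lia|]; rewrite jump_row_sum; lra.
Qed.

Lemma hit_prob_le_lyapunov N k i : (1 <= i)%nat -> (1 <= k)%nat ->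
  hit_prob p N k i <= lyapunov a k / lyapunov a i.
Proof.
  intros hi hk.
  pose proof (lyapunov_pos a i) as hVi.
  apply (hit_prob_le_superharmonic p hp (fun l => lyapunov a l / lyapunov a i)); auto.
  - right; field; lra.
  - intros l _; apply Rlt_le, Rdiv_lt_0_compat; [apply lyapunov_pos | exact hVi].
  - intros k' hk'; destruct k' as [|n]; [lia|].
    rewrite (sum_list_ext _ _ (fun l => / lyapunov a i * (P (S n) l * lyapunov a l)))
      by (intros; unfold Rdiv; ring).
    rewrite sum_list_scal_l; unfold Rdiv; rewrite Rmult_comm.
    apply Rmult_le_compat_r; [apply Rlt_le, Rinv_0_lt_compat; exact hVi|].
    apply jump_lyapunov_le; lra.
Qed.

(* Condition on the first jump: the step up to [S (S n)] has probability
   [P (S n) (S (S n))], and from there [S n] is hit with probability at most [rho]. *)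
Lemma return_prob_partial_le n N :
  return_prob_partial p N (S n) <=
  1 - P (S n) (S (S n)) * (1 - lyapunov a (S (S n)) / lyapunov a (S n)).
Proof.
  set (t := P (S n) (S (S n))); set (rho := lyapunov a (S (S n)) / lyapunov a (S n)).
  set (B := fun l => if (l =? S (S n))%nat then rho else 1).
  assert (hsplit : forall g, sum_list (seq 1 (S n + 1)) (fun l => P (S n) l * g l) =
    sum_list (seq 1 (S n)) (fun l => P (S n) l * g l) + t * g (S (S n))).
  { intros g; replace (S n + 1)%nat with (S (S n)) by lia.
    rewrite seq_S, sum_list_app, sum_list_cons, sum_list_nil, Rplus_0_r; reflexivity. }
  assert (hB : sum_list (seq 1 (S n + 1)) (fun l => P (S n) l * B l) = 1 - t * (1 - rho)).
  { pose proof (jump_row_sum p hp n) as hrow.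
    rewrite hsplit in hrow |- *.
    rewrite (sum_list_ext (seq 1 (S n)) (fun l => P (S n) l * B l) (fun l => P (S n) l * 1)).
    - unfold B; rewrite Nat.eqb_refl; lra.
    - intros l hl; apply in_seq in hl; unfold B.
      rewrite (proj2 (Nat.eqb_neq l (S (S n)))) by lia; reflexivity. }
  rewrite <- hB; destruct N as [|N].
  - apply sum_list_nonneg; intros l hl; apply in_seq in hl.
    apply Rmult_le_pos; [apply (jump_nonneg p hp); lia | unfold B].
    destruct (l =? S (S n))%nat; [| lra].
    apply Rlt_le, Rdiv_lt_0_compat; apply lyapunov_pos.
  - apply (hit_prob_succ_le p hp B); try lia.
    + unfold B; rewrite (proj2 (Nat.eqb_neq (S n) (S (S n)))) by lia; lra.
    + intros l hl _; unfold B; destruct (Nat.eqb_spec l (S (S n))) as [-> | _].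
      * apply hit_prob_le_lyapunov; lia.
      * apply hit_prob_le_1; lia.
Qed.

Lemma return_gap_pos n :
  0 < P (S n) (S (S n)) * (1 - lyapunov a (S (S n)) / lyapunov a (S n)).
Proof.
  apply Rmult_lt_0_compat; [apply jump_above_pos; exact hp|].
  pose proof (lyapunov_decreasing a (S n) (proj1 ha) ltac:(lia)).
  pose proof (lyapunov_pos a (S n)).
  assert (lyapunov a (S (S n)) / lyapunov a (S n) < 1)
    by (apply (Rmult_lt_reg_r (lyapunov a (S n))); [lra |]; field_simplify; lra).
  lra.
Qed.

End Transience.

Theorem proposition8 (p : R) (hp1 : exp (-1) < p) (hp2 : p <= 1) :
  qbar_transient p.
Proof.
  assert (hp : 0 < p <= 1) by (pose proof (exp_pos (-1)); lra).
  pose proof (ln_bounds_of_exp_m1_lt p (conj hp1 hp2)) as hu.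
  set (a := (1 + ln p) / 2).
  assert (ha : 0 < a <= 1) by (unfold a; lra).
  assert (hpa : Rpower p (- a) <= 1 + a) by (apply Rpower_opp_half_log_le; lra).
  intros i hi; destruct i as [|n]; [lia|].
  exists (jump_matrix (qbar p) (S n) (S (S n)) * (1 - lyapunov a (S (S n)) / lyapunov a (S n))).
  split.
  - apply return_gap_pos; assumption.
  - intros N; apply return_prob_partial_le; assumption.
Qed.
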